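(* Let $n\geq1$, $p$ a prime and $R\subsetneq E_n$. Then every $x\in\mathbb{Z}^n$ satisfying $F^{(i)}_R(x)\le0$ for all $i\in E_n$ and $x_i\geq0$ for all $i\in R$ is a linear combination with non-negative rational coefficients of the vectors $\lambda^{(i)}_k$, $1\le i\le h$, $1\le k\le g_i$.
   Context: $E_n=\{1,\dots,n\}$, indices taken modulo $n$; $e_1,\dots,e_n$ standard basis of $\mathbb{Z}^n$, extended $n$-periodically to $e_m$, $m\in\mathbb{Z}$. $\delta_R^{(i)}=-1$ if $i\in R$, $1$ otherwise; $F^{(d)}_R(x)=\sum_{i=0}^{n-1}p^i\delta_R^{(d+i)}x_{d+i}$. Write $E_n\setminus R=\{r_1,\dots,r_h\}$ ($h=n-|R|\ge1$) so that $r_{i+1}$ is the first element of $E_n\setminus R$ in the cyclic sequence $r_i+1,r_i+2,\dots$ (with $r_{h+1}=r_1$, $r_0=r_h$). Let $g_i$ be the smallest positive integer with $r_{i-1}+g_i\equiv r_i \pmod n$ (so $\sum_i g_i=n$). Define $\lambda^{(i)}_k=e_{r_i}+p^ke_{r_i-k}$ for $1\le k\le g_i-1$ and $\lambda^{(i)}_{g_i}=e_{r_i}-p^{g_i}e_{r_{i-1}}$. *)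

From HB Require Import structures.
From mathcomp Require Import all_boot all_order all_algebra.
Set Implicit Arguments. Unset Strict Implicit. Unset Printing Implicit Defensive.
Import Order.TTheory GRing.Theory Num.Theory.
Local Open Scope ring_scope.

(* Conventions: E_n = {1,...,n} with n >= 1 is represented by 'I_n.+1
   = {0,...,n}, i.e. index j of the paper is (j-1) here; all indices are
   taken modulo N := n.+1 via inZp. *)

Definition cidx (n m : nat) : 'I_n.+1 := inZp m.

(* cyclic index r - k (mod N), for k <= N *)
Definition cminus (n : nat) (r : 'I_n.+1) (k : nat) : 'I_n.+1 :=
  cidx n (r + n.+1 - k)%N.

Definition deltaR (n : nat) (R : {set 'I_n.+1}) (i : 'I_n.+1) : int :=
  if i \in R then -1 else 1.

Definition FR (n p : nat) (R : {set 'I_n.+1}) (d : 'I_n.+1)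
    (x : 'I_n.+1 -> int) : int :=
  \sum_(i < n.+1) (p%:Z) ^+ i * deltaR R (cidx n (d + i)) * x (cidx n (d + i)).

(* For r not in R: gap R r = smallest positive g with r - g (mod N) not in R,
   i.e. the g_i with r = r_i and r_{i-1} = r - g_i. *)
Definition gap (n : nat) (R : {set 'I_n.+1}) (r : 'I_n.+1) : nat :=
  (find (fun j : nat => cminus r j.+1 \notin R) (iota 0 n.+1)).+1.

Definition evec (n : nat) (j : 'I_n.+1) : 'I_n.+1 -> rat :=
  fun i => (i == j)%:R.

Definition lambdaR (n p : nat) (R : {set 'I_n.+1}) (r : 'I_n.+1) (k : nat)
    : 'I_n.+1 -> rat :=
  fun i =>
    if (k < gap R r)%N then evec r i + (p%:R) ^+ k * evec (cminus r k) i
    else evec r i - (p%:R) ^+ (gap R r) * evec (cminus r (gap R r)) i.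

(* For r outside R with gap g_r the coefficients are forced.  The coefficient
   of lambda^{(r)}_k, k < g_r, must be x_{r-k} / p^k, which is nonnegative as
   r - k lies in R; this already accounts for every coordinate in R.  Each
   coordinate i outside R meets lambda^{(i)}_k for all k and the last vector
   lambda^{(r)}_{g_r} of the next r outside R, so the last coefficients u_r
   solve a cyclic linear system.  Its solution is
     u_r = - F_R^{(r - g_r + 1)}(x) / (p^{g_r - 1} (p^N - 1)),   N := n.+1,
   nonnegative because F_R(x) <= 0; checking it rests on the shift identity
     F^{(d)} - p^j F^{(d+j)} = (1 - p^N) sum_{s<j} p^s delta^{(d+s)} x_{d+s}. *)

From HB Require Import structures.
From mathcomp Require Import all_boot all_order all_algebra.
From mathcomp Require Import zify ring.
Import Order.TTheory GRing.Theory Num.Theory.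
Local Open Scope ring_scope.
Set Implicit Arguments. Unset Strict Implicit. Unset Printing Implicit Defensive.

Section FindIota.
Variables (P : pred nat) (N : nat).

Lemma find_iota_leq j : (j < N)%N -> P j -> (find P (iota 0 N) <= j)%N.
Proof.
move=> jN Pj; rewrite leqNgt; apply/negP => /(before_find 0).
by rewrite nth_iota // add0n Pj.
Qed.

Lemma nth_find_iota : (find P (iota 0 N) < N)%N -> P (find P (iota 0 N)).
Proof.
move=> fN; have hasP : has P (iota 0 N) by rewrite has_find size_iota.
by have := nth_find 0 hasP; rewrite nth_iota // add0n.
Qed.

Lemma before_find_iota j : (j < find P (iota 0 N))%N -> ~~ P j.
Proof.
move=> jf; have jN : (j < N)%N.
  by apply: leq_trans jf _; rewrite -{2}(size_iota 0 N) find_size.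
by have := before_find 0 jf; rewrite nth_iota // add0n => ->.
Qed.

Lemma find_iota_geq a : (a <= N)%N -> (forall j, (j < a)%N -> ~~ P j) ->
  (a <= find P (iota 0 N))%N.
Proof.
move=> aN notP; rewrite leqNgt; apply/negP => fa.
by have := nth_find_iota (leq_trans fa aN); rewrite (negbTE (notP _ fa)).
Qed.

End FindIota.

Lemma sumr_periodic_shift (T : comPzRingType) (q : T) (z : nat -> T) N g :
  (forall t, z (t + N)%N = z t) -> (g <= N)%N ->
  \sum_(s < N) q ^+ s * z s - q ^+ g * \sum_(s < N) q ^+ s * z (s + g)%N
    = (1 - q ^+ N) * \sum_(s < g) q ^+ s * z s.
Proof.
move=> zN gN; rewrite mulr_sumr.
have -> : \sum_(s < N) q ^+ g * (q ^+ s * z (s + g)%N)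
          = \sum_(g <= s < N + g) q ^+ s * z s.
  rewrite (big_addn 0 (N + g) g) addnK big_mkord; apply: eq_bigr => s _.
  by rewrite mulrA -exprD addnC.
rewrite -!(big_mkord xpredT (fun s => q ^+ s * z s)).
rewrite (big_cat_nat _ (n := g)) //= (big_cat_nat _ (m := g) (n := N) (p := N + g)) //=;
  last exact: leq_addr.
rewrite (big_addn 0 (N + g) N) addKn.
have -> : \sum_(0 <= s < g) q ^+ (s + N) * z (s + N)%N
          = q ^+ N * \sum_(0 <= s < g) q ^+ s * z s.
  by rewrite mulr_sumr; apply: eq_bigr => s _; rewrite zN exprD; ring.
ring.
Qed.

Section CyclicIndex.
Variable n : nat.

Lemma cidx_ord (i : 'I_n.+1) : cidx n i = i.
Proof. by apply: val_inj; rewrite /= modn_small. Qed.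

Lemma eq_cidx a b : a = b %[mod n.+1] -> cidx n a = cidx n b.
Proof. by move=> eq_ab; apply: val_inj. Qed.

Lemma cminus0 (r : 'I_n.+1) : cminus r 0 = r.
Proof. by apply: val_inj; rewrite /cminus subn0 /= modnDr modn_small. Qed.

Lemma cminusN (r : 'I_n.+1) : cminus r n.+1 = r.
Proof. by rewrite /cminus addnK cidx_ord. Qed.

Lemma cminusB (r i : 'I_n.+1) k j : cminus r k = i -> (j <= k <= n.+1)%N ->
  cminus r (k - j) = cidx n (i + j).
Proof.
move=> <- /andP[jk kN]; apply: val_inj => /=.
have -> : (r + n.+1 - (k - j) = (r + n.+1 - k) + j)%N by lia.
by rewrite -modnDml.
Qed.

Lemma cminus_cidxD (i : 'I_n.+1) m : (m <= n.+1)%N -> cminus (cidx n (i + m)) m = i.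
Proof.
move=> mN; apply: val_inj => /=; apply/eqP.
rewrite -{2}(modn_small (ltn_ord i)) -(eqn_modDr m).
have -> : ((i + m) %% n.+1 + n.+1 - m + m = (i + m) %% n.+1 + n.+1)%N by lia.
by rewrite modnDr modn_mod.
Qed.

End CyclicIndex.

Definition dist_next (n : nat) (R : {set 'I_n.+1}) (i : 'I_n.+1) : nat :=
  (find (fun j => cidx n (i + j.+1) \notin R) (iota 0 n.+1)).+1.

Definition next_out (n : nat) (R : {set 'I_n.+1}) (i : 'I_n.+1) : 'I_n.+1 :=
  cidx n (i + dist_next R i).

Section Gaps.
Variables (n : nat) (R : {set 'I_n.+1}).

Lemma gap_leq r : r \notin R -> (gap R r <= n.+1)%N.
Proof. by move=> rR; rewrite /gap ltnS; apply: find_iota_leq; rewrite ?cminusN. Qed.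

Lemma cminus_in_gap r k : (0 < k < gap R r)%N -> cminus r k \in R.
Proof.
case: k => // k /andP[_ kg].
by rewrite -[_ \in R]negbK; apply: (@before_find_iota (fun j => cminus r j.+1 \notin R) n.+1).
Qed.

Lemma cminus_eq_next_out (r i : 'I_n.+1) k : r \notin R -> (0 < k <= gap R r)%N ->
  cminus r k = i -> k = dist_next R i /\ r = next_out R i.
Proof.
move=> rR /andP[k0 kg] rk_i.
have kN : (k <= n.+1)%N := leq_trans kg (gap_leq rR).
have r_ik : r = cidx n (i + k).
  by rewrite -(cminusB rk_i (_ : k <= k <= n.+1)%N) ?leqnn // subnn cminus0.
suff k_dist : k = dist_next R i by rewrite /next_out -k_dist.
rewrite /dist_next -(prednK k0); congr S; apply/eqP; rewrite eqn_leq.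
apply/andP; split; last by apply: find_iota_leq; [lia | rewrite prednK // -r_ik].
apply: find_iota_geq => [|j jk]; first by lia.
rewrite negbK -(cminusB rk_i (_ : j.+1 <= k <= n.+1)%N); last by lia.
by apply: cminus_in_gap; lia.
Qed.

Variable j0 : 'I_n.+1.
Hypothesis j0R : j0 \notin R.

Lemma dist_next_leq i : (dist_next R i <= n.+1)%N.
Proof.
rewrite /dist_next ltnS; apply: (@leq_trans ((j0 + n - i) %% n.+1)).
  apply: find_iota_leq; first by rewrite ltn_pmod.
  suff -> : cidx n (i + ((j0 + n - i) %% n.+1).+1) = j0 by [].
  rewrite -[RHS]cidx_ord; apply: eq_cidx; rewrite -addSnnS modnDmr.
  have i_lt := ltn_ord i.
  have -> : (i.+1 + (j0 + n - i) = j0 + n.+1)%N by lia.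
  by rewrite modnDr.
by rewrite -ltnS ltn_pmod.
Qed.

Lemma next_out_notin i : next_out R i \notin R.
Proof. exact: (@nth_find_iota (fun j => cidx n (i + j.+1) \notin R) n.+1 (dist_next_leq i)). Qed.

Lemma cidxD_in_dist_next i j : (0 < j < dist_next R i)%N -> cidx n (i + j) \in R.
Proof.
case: j => // j /andP[_ j_lt].
by rewrite -[_ \in R]negbK; apply: (@before_find_iota (fun j => cidx n (i + j.+1) \notin R) n.+1).
Qed.

Lemma cminus_next_out i : cminus (next_out R i) (dist_next R i) = i.
Proof. exact: cminus_cidxD (dist_next_leq i). Qed.

Lemma cminus_next_out_in i k : (0 < k <= dist_next R i)%N ->
  (k < dist_next R i)%N || (i \in R) -> cminus (next_out R i) k \in R.
Proof.
move=> /andP[k0 k_le] k_lt_or_iR; have m_le := dist_next_leq i.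
rewrite -[k](subKn k_le) (cminusB (cminus_next_out i)) ?leq_subr //.
case: (posnP (dist_next R i - k)) => [eq0 | pos].
  by rewrite eq0 addn0 cidx_ord; case/orP: k_lt_or_iR => //; lia.
by apply: cidxD_in_dist_next; lia.
Qed.

Lemma dist_next_leq_gap i : (dist_next R i <= gap R (next_out R i))%N.
Proof.
rewrite /gap -[X in (X <= _)%N]prednK // ltnS.
apply: find_iota_geq => [|j j_lt]; first by have := dist_next_leq i; lia.
by rewrite negbK; apply: cminus_next_out_in; lia.
Qed.

Lemma dist_next_lt_gap i : i \in R -> (dist_next R i < gap R (next_out R i))%N.
Proof.
move=> iR; rewrite /gap ltnS.
apply: find_iota_geq => [|j j_lt]; first exact: dist_next_leq.
by rewrite negbK; apply: cminus_next_out_in; rewrite ?iR ?orbT //; lia.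
Qed.

Lemma gap_next_out i : i \notin R -> gap R (next_out R i) = dist_next R i.
Proof.
move=> iR; apply/eqP; rewrite eqn_leq dist_next_leq_gap andbT /gap ltnS.
apply: find_iota_leq; first exact: dist_next_leq.
by rewrite cminus_next_out.
Qed.

End Gaps.

Lemma sum_nat_pick (T : nmodType) (F : nat -> T) a b m : (a <= m < b)%N ->
  \sum_(a <= k < b) (if k == m then F k else 0) = F m.
Proof.
move=> m_in; rewrite (bigD1_seq m) ?mem_index_iota ?iota_uniq //= eqxx big1 ?addr0 //.
by move=> k /negbTE ->.
Qed.

Section LambdaCombination.
Variables (n p : nat) (R : {set 'I_n.+1}).

Definition lambda_weight (r : 'I_n.+1) (k : nat) : rat :=
  if (k < gap R r)%N then p%:R ^+ k else - p%:R ^+ gap R r.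

Lemma lambdaR_coord (r i : 'I_n.+1) k : (k <= gap R r)%N ->
  lambdaR p R r k i = (i == r)%:R + lambda_weight r k * (i == cminus r k)%:R.
Proof.
move=> kg; rewrite /lambdaR /lambda_weight /evec; case: ltnP => // gk.
by rewrite (@anti_leq k (gap R r)) ?kg ?mulNr.
Qed.

Variable j0 : 'I_n.+1.
Hypothesis j0R : j0 \notin R.

Lemma coord_lambda_comb (c : 'I_n.+1 -> nat -> rat) (i : 'I_n.+1) :
  \sum_(r < n.+1 | r \notin R) \sum_(1 <= k < (gap R r).+1) c r k * lambdaR p R r k i
  = (if i \in R then 0 else \sum_(1 <= k < (gap R i).+1) c i k)
    + c (next_out R i) (dist_next R i) * lambda_weight (next_out R i) (dist_next R i).
Proof.
set m := dist_next R i; set r0 := next_out R i; set C := c r0 m * lambda_weight r0 m.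
have coord_r r : r \notin R ->
    \sum_(1 <= k < (gap R r).+1) c r k * lambdaR p R r k i
    = (if r == i then \sum_(1 <= k < (gap R r).+1) c r k else 0) + (if r == r0 then C else 0).
  move=> rR.
  transitivity (\sum_(1 <= k < (gap R r).+1)
      ((if r == i then c r k else 0) + (if (r == r0) && (k == m) then C else 0))).
    apply: eq_big_nat => k /andP[k0 kg]; rewrite lambdaR_coord // mulrDr.
    congr (_ + _); first by rewrite eq_sym; case: eqP; rewrite ?mulr1 ?mulr0.
    case: (eqVneq i (cminus r k)) => [i_rk | i_rk]; last first.
      rewrite mulr0 mulr0; case: (r =P r0) => [r_r0 | //]; case: (k =P m) => [k_m | //].
      by rewrite r_r0 k_m (cminus_next_out j0R) eqxx in i_rk.
    have [k_m r_r0] := cminus_eq_next_out rR (introT andP (conj k0 kg)) (esym i_rk).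
    by rewrite /C k_m r_r0 !eqxx mulr1.
  rewrite big_split /=; congr (_ + _); first by case: eqP => // _; rewrite big1.
  case: eqP => [-> | _] /=; last by rewrite big1.
  by rewrite (sum_nat_pick (fun=> C)) // ltnS (dist_next_leq_gap j0R).
rewrite (eq_bigr _ coord_r) big_split /=; congr (_ + _).
  case iR: (i \in R).
    by rewrite big1 // => r rR; case: eqP => // r_i; rewrite r_i iR in rR.
  rewrite (bigD1 i) ?iR //= eqxx [X in _ + X]big1 ?addr0 //.
  by move=> r /andP[_ /negbTE ->].
by rewrite (bigD1 r0) ?(next_out_notin j0R) //= eqxx big1 ?addr0 // => r /andP[_ /negbTE ->].
Qed.

End LambdaCombination.

Definition signed_coord (n : nat) (R : {set 'I_n.+1}) (x : 'I_n.+1 -> int) (t : nat) : int :=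
  deltaR R (cidx n t) * x (cidx n t).

Lemma FR_sub_shift (n p : nat) (R : {set 'I_n.+1}) (x : 'I_n.+1 -> int) (d : 'I_n.+1) j :
  (j <= n.+1)%N ->
  FR p R d x - p%:Z ^+ j * FR p R (cidx n (d + j)) x
  = (1 - p%:Z ^+ n.+1) * \sum_(s < j) p%:Z ^+ s * signed_coord R x (d + s).
Proof.
move=> jN; pose z s := signed_coord R x (d + s).
have z_periodic t : z (t + n.+1)%N = z t.
  by rewrite /z /signed_coord (@eq_cidx n (d + (t + n.+1)) (d + t)) // addnA modnDr.
rewrite -(sumr_periodic_shift _ z_periodic jN) /FR.
congr (_ - _ * _); apply: eq_bigr => s _; rewrite -mulrA //.
rewrite /z /signed_coord (@eq_cidx n (cidx n (d + j) + s) (d + (s + j))) //= modnDml.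
by rewrite addnAC addnA.
Qed.

Section Coefficients.
Variables (n p : nat) (R : {set 'I_n.+1}) (x : 'I_n.+1 -> int).
Hypothesis p_gt1 : (1 < p)%N.

Local Notation P := (p%:R : rat).

Lemma signed_window_sum (i : 'I_n.+1) : i \notin R ->
  (\sum_(s < gap R i) p%:Z ^+ s * signed_coord R x (cminus i (gap R i).-1 + s))%:~R
  = P ^+ (gap R i).-1
    * ((x i)%:~R - \sum_(1 <= k < gap R i) (x (cminus i k))%:~R / P ^+ k).
Proof.
move=> iR; set g := gap R i; set d := cminus i g.-1.
have g_gt0 : (0 < g)%N by [].
have g_le : (g <= n.+1)%N := gap_leq iR.
have P_unit : P \is a GRing.unit by rewrite unitfE pnatr_eq0; lia.
rewrite -(big_mkord xpredT (fun s => p%:Z ^+ s * signed_coord R x (d + s))).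
have term s : (s < g)%N ->
    (p%:Z ^+ (0 + g - s.+1) * signed_coord R x (d + (0 + g - s.+1)))%:~R
    = P ^+ g.-1 * ((deltaR R (cminus i s) * x (cminus i s))%:~R / P ^+ s).
  move=> s_lt; have -> : (0 + g - s.+1 = g.-1 - s)%N by lia.
  have s_le : (s <= g.-1)%N by lia.
  rewrite /signed_coord -(@cminusB _ i d g.-1 (g.-1 - s)) ?subKn //; last by lia.
  by rewrite rmorphM rmorphXn /= pmulrn exprB //; ring.
rewrite rmorph_sum big_nat_rev (eq_big_nat _ _ (F2 := fun s =>
  P ^+ g.-1 * ((deltaR R (cminus i s) * x (cminus i s))%:~R / P ^+ s))); last first.
  by move=> s /andP[_ s_lt]; exact: term.
rewrite -mulr_sumr big_ltn // cminus0 /deltaR (negbTE iR) mul1r expr0 divr1.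
rewrite -sumrN; congr (_ * (_ + _)); apply: eq_big_nat => k /andP[k_gt0 k_lt].
by rewrite cminus_in_gap ?k_gt0 // mulN1r rmorphN mulNr.
Qed.

Definition last_coef (r : 'I_n.+1) : rat :=
  - (FR p R (cminus r (gap R r).-1) x)%:~R / (P ^+ (gap R r).-1 * (P ^+ n.+1 - 1)).

Definition comb_coef (r : 'I_n.+1) (k : nat) : rat :=
  if (0 < k < gap R r)%N then (x (cminus r k))%:~R / P ^+ k else last_coef r.

Lemma comb_coef_ge0 r k : (forall d, FR p R d x <= 0) ->
  (forall i, i \in R -> 0 <= x i) -> 0 <= comb_coef r k.
Proof.
move=> FR_le0 x_ge0; have P_gt1 : 1 < P by rewrite ltr1n.
rewrite /comb_coef; case: ifP => [k_in | _].
  by rewrite divr_ge0 ?exprn_ge0 ?ler0n // ler0z x_ge0 // cminus_in_gap.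
rewrite /last_coef divr_ge0 ?oppr_ge0 ?lerz0 // mulr_ge0 ?exprn_ge0 ?ler0n //.
by rewrite subr_ge0 exprn_ege1 // ltW.
Qed.

Lemma coord_in_R (j0 i : 'I_n.+1) : j0 \notin R -> i \in R ->
  (x i)%:~R = comb_coef (next_out R i) (dist_next R i)
              * lambda_weight p R (next_out R i) (dist_next R i).
Proof.
move=> j0R iR; have m_lt := dist_next_lt_gap j0R iR.
rewrite /comb_coef /lambda_weight m_lt (cminus_next_out j0R) divfK // expf_neq0 //.
by rewrite pnatr_eq0; lia.
Qed.

Lemma coord_notin_R (i : 'I_n.+1) : i \notin R ->
  (x i)%:~R = \sum_(1 <= k < (gap R i).+1) comb_coef i k
              + comb_coef (next_out R i) (dist_next R i)
                * lambda_weight p R (next_out R i) (dist_next R i).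
Proof.
move=> iR; set g := gap R i; set m := dist_next R i; set r0 := next_out R i.
have gap_r0 : gap R r0 = m := gap_next_out iR iR.
have g_le : (g <= n.+1)%N := gap_leq iR.
have g_gt0 : (0 < g)%N by [].
have m_gt0 : (0 < m)%N by [].
rewrite big_nat_recr //=.
have -> : \sum_(1 <= k < g) comb_coef i k = \sum_(1 <= k < g) (x (cminus i k))%:~R / P ^+ k.
  by apply: eq_big_nat => k k_in; rewrite /comb_coef k_in.
have -> : comb_coef i g = last_coef i by rewrite /comb_coef ltnn andbF.
have -> : comb_coef r0 m = last_coef r0 by rewrite /comb_coef gap_r0 ltnn andbF.
have -> : lambda_weight p R r0 m = - P ^+ m by rewrite /lambda_weight gap_r0 ltnn.
rewrite /last_coef gap_r0.
set d := cminus i g.-1.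
have d_shift : cidx n (d + g) = cminus r0 m.-1.
  rewrite -subn1 (cminusB (cminus_next_out iR i)); last by have := dist_next_leq iR i; lia.
  apply: eq_cidx; rewrite /= modnDml.
  have -> : (i + n.+1 - g.-1 + g = i + 1 + n.+1)%N by lia.
  by rewrite modnDr.
have shift := congr1 (intmul (1 : rat)) (@FR_sub_shift n p R x d g g_le).
have intr_pX k : ((p%:Z ^+ k)%:~R : rat) = P ^+ k by rewrite rmorphXn.
rewrite d_shift !intrB !intrM intrB !intr_pX signed_window_sum // in shift.
set S := \sum_(1 <= k < g) _ in shift *.
set Fd := (FR p R d x)%:~R in shift *; set Fe := (FR p R _ x)%:~R in shift *.
have Fd_eq : Fd = P ^+ g * Fe + (Fd - P ^+ g * Fe) by ring.
rewrite shift in Fd_eq.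
have P_neq0 : P != 0 by rewrite pnatr_eq0; lia.
have Q_neq0 : P ^+ n.+1 - 1 != 0.
  by rewrite subr_eq0 gt_eqF // exprn_egt1 // ltr1n.
rewrite Fd_eq -[in P ^+ g](prednK g_gt0) -[in P ^+ m](prednK m_gt0) !exprS.
field.
by rewrite -exprS Q_neq0 !expf_neq0.
Qed.

End Coefficients.

Theorem mainTheorem5 (n p : nat) (R : {set 'I_n.+1}) (x : 'I_n.+1 -> int) :
  prime p ->
  R != [set: 'I_n.+1] ->
  (forall d : 'I_n.+1, FR p R d x <= 0) ->
  (forall i : 'I_n.+1, i \in R -> 0 <= x i) ->
  exists c : 'I_n.+1 -> nat -> rat,
    (forall r k, 0 <= c r k) /\
    forall i : 'I_n.+1,
      (x i)%:~R = \sum_(r < n.+1 | r \notin R)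
                    \sum_(1 <= k < (gap R r).+1) c r k * lambdaR p R r k i.
Proof.
move=> p_prime R_proper FR_le0 x_ge0.
have p_gt1 := prime_gt1 p_prime.
have /subsetPn[j0 _ j0R] : ~~ ([set: 'I_n.+1] \subset R) by rewrite subTset.
exists (comb_coef p R x); split => [r k | i]; first exact: comb_coef_ge0.
rewrite (coord_lambda_comb p j0R); case: ifPn => iR.
  by rewrite add0r (coord_in_R x p_gt1 j0R iR).
exact: coord_notin_R.
Qed.
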